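(* Let $t\ge 2$ be an integer and let $G_t$ be the graph defined below. Then every binomial in $\mathcal{G}=\mathcal{G}_1\cup\mathcal{G}_2\cup\mathcal{G}_3$ is primitive, $I_{G_t}$ is generated by $\mathcal{G}$, and $\mathcal{G}$ is a universal Gröbner basis of $I_{G_t}$, where $\mathcal{G}_1=\{a_ib_j-a_jb_i : 1\le i<j\le t\}$, $\mathcal{G}_2=\{a_ia_jf_1f_3e_2-f_2e_1e_3b_ib_j : 1\le i<j\le t\}$, $\mathcal{G}_3=\{a_i^2f_1f_3e_2-f_2e_1e_3b_i^2 : 1\le i\le t\}$.
   Context: $\mathbb{K}$ is an algebraically closed field of characteristic zero. For $t\ge2$, $G_t$ is the graph with vertex set $\{x_1,x_2,y_1,\dots,y_t,z_1,z_2,w_1,w_2\}$ and edges $a_i=\{x_1,y_i\}$, $b_i=\{x_2,y_i\}$ ($1\le i\le t$), $e_1=\{x_1,z_1\}$, $e_2=\{z_1,z_2\}$, $e_3=\{z_2,x_1\}$, $f_1=\{x_2,w_1\}$, $f_2=\{w_1,w_2\}$, $f_3=\{w_2,x_2\}$ (i.e. $K_{2,t}$ with a triangle attached at each of the two vertices of degree $t$). Its toric ideal $I_{G_t}$ is the kernel of the $\mathbb{K}$-algebra map from $\mathbb{K}[E_t]=\mathbb{K}[a_1,\dots,a_t,f_1,f_2,f_3,e_1,e_2,e_3,b_1,\dots,b_t]$ to the polynomial ring on the vertices sending each edge variable to the product of its two endpoints. A binomial $u_1-u_2\in I_{G_t}$ is primitive if there is no binomial $g_1-g_2\in I_{G_t}$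 (other than itself) with $g_1\mid u_1$ and $g_2\mid u_2$. A universal Gröbner basis is a set that is a Gröbner basis with respect to every monomial order. *)

From HB Require Import structures.
From mathcomp Require Import all_boot all_order all_algebra.
From mathcomp Require Import mpoly.

Set Implicit Arguments.
Unset Strict Implicit.
Unset Printing Implicit Defensive.

Import Order.TTheory GRing.Theory.
Local Open Scope ring_scope.

(* Edge variables of K[E_t] (there are 2t+6 of them), 0-indexed:       *)
(*   a_i = i            (0 <= i < t)    a_i = {x1, y_i}                 *)
(*   b_i = t + i        (0 <= i < t)    b_i = {x2, y_i}                 *)
(*   e1 = 2t, e2 = 2t+1, e3 = 2t+2,  f1 = 2t+3, f2 = 2t+4, f3 = 2t+5    *)
(* Vertices (there are t+6 of them):                                   *)
(*   x1 = 0, x2 = 1, z1 = 2, z2 = 3, w1 = 4, w2 = 5, y_i = 6 + i        *)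
(* The paper's indices 1..t correspond to 0..t-1 here.                 *)

Definition nE (t : nat) : nat := (5 + t.*2).+1.
Definition nV (t : nat) : nat := (5 + t).+1.

Definition var_a (t : nat) (i : 'I_t) : 'I_(nE t) := inord i.
Definition var_b (t : nat) (i : 'I_t) : 'I_(nE t) := inord (t + i)%N.
Definition var_e1 (t : nat) : 'I_(nE t) := inord (t.*2).
Definition var_e2 (t : nat) : 'I_(nE t) := inord (t.*2 + 1)%N.
Definition var_e3 (t : nat) : 'I_(nE t) := inord (t.*2 + 2)%N.
Definition var_f1 (t : nat) : 'I_(nE t) := inord (t.*2 + 3)%N.
Definition var_f2 (t : nat) : 'I_(nE t) := inord (t.*2 + 4)%N.
Definition var_f3 (t : nat) : 'I_(nE t) := inord (t.*2 + 5)%N.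

Definition endpts (t k : nat) : nat * nat :=
  if (k < t)%N then (0, 6 + k)%N
  else if (k < t.*2)%N then (1, 6 + (k - t))%N
  else if (k == t.*2)%N then (0, 2)%N            (* e1 = {x1, z1} *)
  else if (k == t.*2 + 1)%N then (2, 3)%N        (* e2 = {z1, z2} *)
  else if (k == t.*2 + 2)%N then (3, 0)%N        (* e3 = {z2, x1} *)
  else if (k == t.*2 + 3)%N then (1, 4)%N        (* f1 = {x2, w1} *)
  else if (k == t.*2 + 4)%N then (4, 5)%N        (* f2 = {w1, w2} *)
  else (5, 1)%N.                             (* f3 = {w2, x2} *)

Definition edge_image (K : fieldType) (t : nat) (k : 'I_(nE t))
  : {mpoly K[nV t]} :=
  'X_(inord (endpts t k).1) * 'X_(inord (endpts t k).2).

Arguments edge_image : clear implicits.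

Definition toric_map (K : fieldType) (t : nat) (p : {mpoly K[nE t]})
  : {mpoly K[nV t]} :=
  p \mPo [tuple edge_image K t k | k < nE t].

Arguments toric_map : clear implicits.

Definition toric_ideal (K : fieldType) (t : nat) (p : {mpoly K[nE t]}) : Prop :=
  toric_map K t p = 0.
Arguments toric_ideal : clear implicits.

Definition binom (K : fieldType) (n : nat) (u : 'X_{1..n} * 'X_{1..n})
  : {mpoly K[n]} := 'X_[u.1] - 'X_[u.2].

Definition ideal_gen (K : fieldType) (n : nat) (S : {mpoly K[n]} -> Prop)
  (p : {mpoly K[n]}) : Prop :=
  exists (gs cs : seq {mpoly K[n]}),
    (forall g, g \in gs -> S g) /\ size cs = size gs /\
    p = \sum_(i < size gs) cs`_i * gs`_i.

Definition primitive (K : fieldType) (n : nat) (I : {mpoly K[n]} -> Prop)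
  (u1 u2 : 'X_{1..n}) : Prop :=
  u1 != u2 /\ I (binom K (u1, u2)) /\
  forall g1 g2 : 'X_{1..n}, g1 != g2 -> (g1 <= u1)%MM -> (g2 <= u2)%MM ->
    I (binom K (g1, g2)) -> g1 = u1 /\ g2 = u2.

Definition monomial_order (n : nat) (le : rel 'X_{1..n}) : Prop :=
  reflexive le /\ transitive le /\ antisymmetric le /\ total le /\
  (forall m, le 0%MM m) /\
  (forall m1 m2 m3, le m1 m2 -> le (m1 + m3)%MM (m2 + m3)%MM).

Definition is_lead_mon (K : fieldType) (n : nat) (le : rel 'X_{1..n})
  (p : {mpoly K[n]}) (m : 'X_{1..n}) : Prop :=
  m \in msupp p /\ forall m', m' \in msupp p -> le m' m.

Definition is_groebner (K : fieldType) (n : nat) (le : rel 'X_{1..n})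
  (I : {mpoly K[n]} -> Prop) (G : seq ('X_{1..n} * 'X_{1..n})) : Prop :=
  (forall g, g \in G -> I (binom K g)) /\
  forall f, I f -> f != 0 ->
    exists2 g, g \in G &
      exists mf mg, [/\ is_lead_mon le f mf, is_lead_mon le (binom K g) mg
                      & (mg <= mf)%MM].

Definition universal_groebner (K : fieldType) (n : nat)
  (I : {mpoly K[n]} -> Prop) (G : seq ('X_{1..n} * 'X_{1..n})) : Prop :=
  forall le : rel 'X_{1..n}, monomial_order le -> is_groebner le I G.

Definition mU (t : nat) (k : 'I_(nE t)) : 'X_{1..nE t} := U_(k)%MM.

Definition G1 (t : nat) : seq ('X_{1..nE t} * 'X_{1..nE t}) :=
  [seq ((mU (var_a i) + mU (var_b j))%MM, (mU (var_a j) + mU (var_b i))%MM)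
  | i : 'I_t <- enum 'I_t, j : 'I_t <- filter (fun j : 'I_t => (i < j)%N) (enum 'I_t)].

Definition fFe (t : nat) : 'X_{1..nE t} :=
  (mU (var_f1 t) + mU (var_f3 t) + mU (var_e2 t))%MM.
Definition fEe (t : nat) : 'X_{1..nE t} :=
  (mU (var_f2 t) + mU (var_e1 t) + mU (var_e3 t))%MM.

Definition G2 (t : nat) : seq ('X_{1..nE t} * 'X_{1..nE t}) :=
  [seq ((mU (var_a i) + mU (var_a j) + fFe t)%MM,
        (fEe t + mU (var_b i) + mU (var_b j))%MM)
  | i : 'I_t <- enum 'I_t, j : 'I_t <- filter (fun j : 'I_t => (i < j)%N) (enum 'I_t)].

Definition G3 (t : nat) : seq ('X_{1..nE t} * 'X_{1..nE t}) :=
  [seq ((mU (var_a i) + mU (var_a i) + fFe t)%MM,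
        (fEe t + mU (var_b i) + mU (var_b i))%MM)
  | i : 'I_t <- enum 'I_t].

Definition Gall (t : nat) : seq ('X_{1..nE t} * 'X_{1..nE t}) :=
  G1 t ++ G2 t ++ G3 t.

From HB Require Import structures.
From mathcomp Require Import all_boot all_order all_algebra.
From mathcomp Require Import mpoly.
From mathcomp Require Import zify ring.

Set Implicit Arguments.
Unset Strict Implicit.
Unset Printing Implicit Defensive.
Import Order.TTheory GRing.Theory.
Local Open Scope ring_scope.

(* The toric ideal of G_t is the kernel of the monomial map sending
   an edge to the product of its endpoints, so x^u - x^v lies in it iff u and v
   have the same vertex degrees.  The key fact is that whenever u <> v have the
   same vertex degrees, one side of some binomial of G divides x^u and the other
   side divides x^v.  If e2 occurs more often in u than in v, the degrees at z1,
   z2, x1 and at w1, w2, x2 force u to contain f1 f3 e2 and two more a's than v,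
   and v to contain f2 e1 e3 together with the matching b's: a G2 or G3 binomial
   fits.  If e2 is balanced, so are all triangle edges, u and v differ only in
   the a_i, b_i, and a G1 binomial fits.  Peeling such binomials off, by
   induction on the degree, shows both that G generates the ideal and that for
   every monomial order the leading monomial of each element of the ideal is
   divisible by the leading monomial of an element of G.  Primitivity follows
   from the same fact, because no element of G contains another one side by
   side, in either orientation. *)

Section IdealGen.
Variables (K : fieldType) (n : nat) (S : {mpoly K[n]} -> Prop).

Lemma ideal_gen0 : ideal_gen S 0.
Proof. by exists [::], [::]; rewrite big_ord0. Qed.

Lemma ideal_gen_mem g : S g -> ideal_gen S g.
Proof.
move=> Sg; exists [:: g], [:: 1]; split=> //; last by rewrite big_ord1 mul1r.
by move=> x; rewrite inE => /eqP ->.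
Qed.

Lemma ideal_genD p q : ideal_gen S p -> ideal_gen S q -> ideal_gen S (p + q).
Proof.
move=> [gs [cs [Sgs [szcs ->]]]] [gs' [cs' [Sgs' [szcs' ->]]]].
exists (gs ++ gs'), (cs ++ cs'); split.
  by move=> x; rewrite mem_cat => /orP[/Sgs|/Sgs'].
split; first by rewrite !size_cat szcs szcs'.
rewrite size_cat big_split_ord /=; congr (_ + _); apply: eq_bigr => i _.
  by rewrite !nth_cat szcs ltn_ord.
by rewrite !nth_cat szcs ltnNge leq_addr /= addKn.
Qed.

Lemma ideal_genMl q p : ideal_gen S p -> ideal_gen S (q * p).
Proof.
move=> [gs [cs [Sgs [szcs ->]]]].
exists gs, [seq q * c | c <- cs]; split=> //; split; first by rewrite size_map.
rewrite mulr_sumr; apply: eq_bigr => i _.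
by rewrite (nth_map 0) ?mulrA // szcs ltn_ord.
Qed.

Lemma ideal_genN p : ideal_gen S p -> ideal_gen S (- p).
Proof. by rewrite -mulN1r; apply: ideal_genMl. Qed.

End IdealGen.

Lemma lepm_anti n : antisymmetric (fun m1 m2 : 'X_{1..n} => (m1 <= m2)%MM).
Proof.
move=> m1 m2 /andP[/mnm_lepP le12 /mnm_lepP le21]; apply/mnmP => i.
by apply/eqP; rewrite eqn_leq le12 le21.
Qed.

Lemma mnm_sum_count n (xs : seq 'I_n) k : ((\sum_(x <- xs) U_(x))%MM k = count_mem k xs)%N.
Proof.
elim: xs => [|x xs IH]; first by rewrite big_nil mnm0E.
by rewrite big_cons mnmDE IH mnm1E.
Qed.

Lemma mnm_sum_le n (xs : seq 'I_n) (u : 'X_{1..n}) :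
  (forall x, x \in xs -> count_mem x xs <= u x)%N -> (\sum_(x <- xs) U_(x) <= u)%MM.
Proof.
move=> le_xs; apply/mnm_lepP => k; rewrite mnm_sum_count.
by have [/le_xs //|/count_memPn ->] := boolP (k \in xs).
Qed.

Lemma mpolyX_inj (K : fieldType) n : injective (fun m : 'X_{1..n} => 'X_[m] : {mpoly K[n]}).
Proof.
move=> m1 m2 /(congr1 (mcoeff m1)); rewrite !mcoeffX eqxx.
by case: eqP => // _ /eqP; rewrite oner_eq0.
Qed.

Lemma seq_max_exists (T : eqType) (le : rel T) (s : seq T) :
  total le -> transitive le -> s != [::] ->
  exists2 m, m \in s & forall m', m' \in s -> le m' m.
Proof.
move=> le_total le_trans; elim: s => [//|x [|y s] IH] _.
  by exists x; rewrite ?inE // => m' /[!inE] /eqP ->; case/orP: (le_total x x).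
have [m ms mmax] := IH isT.
have [lexm|lemx] := orP (le_total x m).
  exists m; first by rewrite inE ms orbT.
  by move=> m' /[!inE] /orP[/eqP ->|/mmax].
exists x; first exact: mem_head.
move=> m' /[!inE] /orP[/eqP ->|/mmax/le_trans]; last exact.
by case/orP: (le_total x x).
Qed.

Section MonomialMap.
Variables (K : fieldType) (n k : nat) (e : 'I_n -> 'X_{1..k}).

Definition mono_map (p : {mpoly K[n]}) : {mpoly K[k]} :=
  p \mPo [tuple 'X_[e i] | i < n].

Definition mono_exp (m : 'X_{1..n}) : 'X_{1..k} := (\sum_(i < n) e i *+ m i)%MM.

Lemma mono_expD : {morph mono_exp : m1 m2 / (m1 + m2)%MM}.
Proof.
move=> m1 m2; rewrite /mono_exp -big_split; apply: eq_bigr => i _.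
by apply/mnmP => j; rewrite !(mnmDE, mulmnE) mulnDr.
Qed.

Lemma mono_expU i : mono_exp U_(i) = e i.
Proof.
rewrite /mono_exp (bigD1 i) //= mnm1E eqxx mulm1n big1 ?addm0 // => j /negbTE ji.
by rewrite mnm1E eq_sym ji mulm0n.
Qed.

Lemma mono_mapB : {morph mono_map : p q / p - q}.
Proof. exact: comp_mpolyB. Qed.

Lemma mono_mapZ c p : mono_map (c *: p) = c *: mono_map p.
Proof. exact: comp_mpolyZ. Qed.

Lemma mono_mapM : {morph mono_map : p q / p * q}.
Proof. exact: rmorphM. Qed.

Lemma mono_map_sum (I : Type) (r : seq I) (F : I -> {mpoly K[n]}) :
  mono_map (\sum_(i <- r) F i) = \sum_(i <- r) mono_map (F i).
Proof. exact: raddf_sum. Qed.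

Lemma mono_mapX m : mono_map 'X_[m] = 'X_[mono_exp m].
Proof.
rewrite /mono_map comp_mpolyX.
by under eq_bigr => i _ do rewrite tnth_mktuple; rewrite mprodXnE.
Qed.

Lemma mono_map_binom u : mono_map (binom K u) = 0 <-> mono_exp u.1 = mono_exp u.2.
Proof.
rewrite /binom mono_mapB !mono_mapX; split=> [/eqP|->]; last exact: subrr.
by rewrite subr_eq0 => /eqP /mpolyX_inj.
Qed.

Lemma mono_map_msupp p :
  mono_map p = \sum_(m <- msupp p) p@_m *: 'X_[mono_exp m].
Proof.
rewrite {1}[p]mpolyE mono_map_sum; apply: eq_bigr => m _.
by rewrite mono_mapZ mono_mapX.
Qed.

Lemma mono_map_ker_partner p m : mono_map p = 0 -> m \in msupp p ->
  exists m', [/\ m' \in msupp p, m' != m & mono_exp m' = mono_exp m].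
Proof.
move=> p_ker pm.
have [/hasP[m' pm' /andP[m'm /eqP fib]]|no_partner] :=
  boolP (has (fun m' => (m' != m) && (mono_exp m' == mono_exp m)) (msupp p)).
  by exists m'.
exfalso; move: (pm); rewrite mcoeff_msupp => /eqP; apply.
have := congr1 (mcoeff (mono_exp m)) p_ker.
rewrite mono_map_msupp raddf_sum mcoeff0 (bigD1_seq m) ?msupp_uniq //=.
rewrite mcoeffZ mcoeffX eqxx mulr1 big_seq_cond big1 ?addr0 // => m' /andP[pm' m'm].
move/hasPn: no_partner => /(_ m' pm'); rewrite m'm /= => /negbTE fib.
by rewrite mcoeffZ mcoeffX fib mulr0.
Qed.

End MonomialMap.

Lemma is_lead_monN (K : fieldType) n (le : rel 'X_{1..n}) (p : {mpoly K[n]}) m :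
  is_lead_mon le (- p) m <-> is_lead_mon le p m.
Proof.
have eq_msupp := perm_mem (msuppN p).
split=> -[pm pmax]; split=> [|m'].
- by rewrite -eq_msupp.
- by rewrite -eq_msupp => /pmax.
- by rewrite eq_msupp.
- by rewrite eq_msupp => /pmax.
Qed.

Lemma binom_lead (K : fieldType) n (le : rel 'X_{1..n}) u :
  reflexive le -> u.1 != u.2 -> le u.2 u.1 -> is_lead_mon le (binom K u) u.1.
Proof.
move=> le_refl u12 le21; split.
  by rewrite mcoeff_msupp mcoeffB !mcoeffX eqxx [u.2 == _]eq_sym (negbTE u12) subr0 oner_eq0.
move=> m; rewrite mcoeff_msupp mcoeffB !mcoeffX.
have [<- //|_] := eqVneq u.1 m; have [<- //|_] := eqVneq u.2 m.
by rewrite subrr eqxx.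
Qed.

Lemma monomial_order_addr_cancel n (le : rel 'X_{1..n}) m1 m2 m :
  monomial_order le -> le (m1 + m)%MM (m2 + m)%MM -> le m1 m2.
Proof.
move=> [le_refl [_ [le_anti [le_total [_ le_add]]]]] le12.
have [//|le21] := orP (le_total m1 m2).
have -> // : m1 = m2.
by apply/(@addIm _ m)/le_anti; rewrite le12 le_add.
Qed.

Lemma size_msupp_cancel (K : fieldType) n (p : {mpoly K[n]}) m m' :
  m \in msupp p -> m' \in msupp p -> m' != m ->
  (size (msupp (p - p@_m *: ('X_[m] - 'X_[m']))) < size (msupp p))%N.
Proof.
move=> pm pm' m'm.
have sub : {subset msupp (p - p@_m *: ('X_[m] - 'X_[m'])) <= rem m (msupp p)}.
  move=> x; rewrite (mem_rem_uniq _ (msupp_uniq p)) inE /= !mcoeff_msupp.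
  rewrite mcoeffB mcoeffZ mcoeffB !mcoeffX.
  have [<-|mx] := eqVneq m x; first by rewrite (negbTE m'm) subr0 mulr1 subrr eqxx.
  have [<-|_] := eqVneq m' x; last by rewrite subrr mulr0 subr0 => ->.
  by move: pm'; rewrite mcoeff_msupp => ->.
apply: leq_ltn_trans (uniq_leq_size (msupp_uniq _) sub) _.
by rewrite size_rem //; case: (msupp p) pm.
Qed.

Section CrossDivisorBasis.
Variables (K : fieldType) (n k : nat) (e : 'I_n -> 'X_{1..k}).
Variable G : seq ('X_{1..n} * 'X_{1..n}).

Local Notation phi := (mono_exp e).
Local Notation ker := (fun p : {mpoly K[n]} => mono_map e p = 0).
Local Notation gens := (fun q => q \in [seq binom K g | g <- G]).

Hypothesis G_fiber : forall g, g \in G -> phi g.1 = phi g.2 /\ g.1 != g.2.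
Hypothesis G_cross : forall u v, phi u = phi v -> u != v ->
  exists2 g, g \in G &
    ((g.1 <= u)%MM && (g.2 <= v)%MM) || ((g.2 <= u)%MM && (g.1 <= v)%MM).

Definition signed_gen (p q : 'X_{1..n}) := exists2 g, g \in G & g = (p, q) \/ g = (q, p).

Lemma signed_gen_fiber p q : signed_gen p q -> phi p = phi q /\ p != q.
Proof.
case=> g /G_fiber [fib neq] [] eg; move: fib neq; rewrite eg //=.
by move=> -> qp; rewrite eq_sym.
Qed.

Lemma signed_gen_ideal_gen p q : signed_gen p q -> ideal_gen gens ('X_[p] - 'X_[q]).
Proof.
case=> g Gg [] eg; have := @ideal_gen_mem _ _ gens _ (map_f (@binom K n) Gg); rewrite eg //.
by move/ideal_genN; rewrite /binom opprB.
Qed.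

Lemma signed_gen_lead (le : rel 'X_{1..n}) p q : signed_gen p q -> reflexive le -> le q p ->
  exists2 g, g \in G & is_lead_mon le (binom K g) p.
Proof.
move=> step le_refl le_qp; have [_ pq] := signed_gen_fiber step.
case: step => g Gg [] eg; exists g => //; rewrite eg.
  exact: (@binom_lead K n le (p, q)).
by rewrite -is_lead_monN /binom opprB; apply: (@binom_lead K n le (p, q)).
Qed.

Lemma fiber_peel u v : phi u = phi v -> u != v ->
  exists p q u' v', [/\ signed_gen p q, u = (u' + p)%MM, v = (v' + q)%MM,
    phi u' = phi v' & (mdeg u' + mdeg v' < mdeg u + mdeg v)%N].
Proof.
move=> fib uv.
have [p [q [step pu qv]]] : exists p q, [/\ signed_gen p q, (p <= u)%MM & (q <= v)%MM].
  have [g Gg /orP[/andP[gu gv]|/andP[gu gv]]] := G_cross fib uv.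
    by exists g.1, g.2; split=> //; exists g => //; left; case: g {Gg gu gv}.
  by exists g.2, g.1; split=> //; exists g => //; right; case: g {Gg gu gv}.
have [fpq pq] := signed_gen_fiber step.
exists p, q, (u - p)%MM, (v - q)%MM; rewrite !submK //; split=> //.
  apply: (@addIm _ (phi p)).
  by rewrite -!mono_expD submK // mono_expD fpq -mono_expD submK.
have : (0 < mdeg p + mdeg q)%N.
  rewrite lt0n addn_eq0 !mdeg_eq0; apply: contra pq => /andP[/eqP-> /eqP->].
  exact: eqxx.
by rewrite -(submK pu) -(submK qv) !mdegD !submK //; lia.
Qed.

Lemma fiber_binom_ideal_gen u v : phi u = phi v -> ideal_gen gens ('X_[u] - 'X_[v]).
Proof.
have [N] := ubnP (mdeg u + mdeg v); elim: N => // N IH in u v * => /ltnSE degN fib.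
have [<-|uv] := eqVneq u v; first by rewrite subrr; apply: ideal_gen0.
have [p [q [u' [v' [step eu ev fib' deg']]]]] := fiber_peel fib uv.
rewrite eu ev.
have -> : 'X_[u' + p] - 'X_[v' + q] =
    'X_[u'] * ('X_[p] - 'X_[q]) + 'X_[q] * ('X_[u'] - 'X_[v']) :> {mpoly K[n]}.
  by rewrite !mpolyXD; ring.
apply: ideal_genD; apply: ideal_genMl; first exact: signed_gen_ideal_gen.
exact: IH (leq_trans deg' degN) fib'.
Qed.

Definition lead_divides (u v : 'X_{1..n}) := forall le : rel 'X_{1..n},
  monomial_order le -> le v u -> v != u ->
  exists2 g, g \in G & exists2 mg, is_lead_mon le (binom K g) mg & (mg <= u)%MM.

Lemma fiber_lead_divides u v : phi u = phi v -> lead_divides u v.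
Proof.
have [N] := ubnP (mdeg u + mdeg v); elim: N => // N IH in u v * => /ltnSE degN fib.
move=> le ord le_vu; rewrite eq_sym => uv.
have [le_refl [le_trans [le_anti [le_total [_ le_add]]]]] := ord.
have [p [q [u' [v' [step eu ev fib' deg']]]]] := fiber_peel fib uv.
have [le_qp|le_pq] := orP (le_total q p).
  have [g Gg lead_g] := signed_gen_lead step le_refl le_qp.
  by exists g => //; exists p; rewrite // eu lem_addl.
have le_pq_u' : le (u' + p)%MM (u' + q)%MM.
  by rewrite ![(u' + _)%MM]addmC; apply: le_add.
have le_vu' : le v' u'.
  by apply: (monomial_order_addr_cancel (m := q) ord); apply: le_trans le_pq_u'; rewrite -eu -ev.
have vu' : v' != u'.
  apply: contra uv => /eqP vu'; rewrite eu ev vu'; apply/eqP/le_anti.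
  by rewrite le_pq_u' -{1}vu' -ev -eu le_vu.
have [g Gg [mg lead_g mg_u']] := IH u' v' (leq_trans deg' degN) fib' le ord le_vu' vu'.
by exists g => //; exists mg; rewrite // eu (lepm_trans mg_u') ?lem_addr.
Qed.

Lemma ker_ideal_gen p : ker p -> ideal_gen gens p.
Proof.
have [N] := ubnP (size (msupp p)); elim: N => // N IH in p * => /ltnSE szN p_ker.
have [->|p0] := eqVneq p 0; first exact: ideal_gen0.
have [m pm] : exists m, m \in msupp p.
  by move: p0; rewrite -msupp_eq0; case: (msupp p) => // m s _; exists m; rewrite inE eqxx.
have [m' [pm' m'm fib]] := mono_map_ker_partner p_ker pm.
rewrite -(subrK (p@_m *: ('X_[m] - 'X_[m'])) p).
apply: ideal_genD; last by rewrite -mul_mpolyC; apply/ideal_genMl/fiber_binom_ideal_gen.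
apply: IH; first exact: leq_trans (size_msupp_cancel pm pm' m'm) szN.
by rewrite mono_mapB mono_mapZ mono_mapB !mono_mapX p_ker fib subrr scaler0 subrr.
Qed.

Lemma ideal_gen_ker p : ideal_gen gens p -> ker p.
Proof.
move=> [gs [cs [gs_gens [_ ->]]]].
rewrite mono_map_sum big1 // => i _; rewrite mono_mapM.
have /gs_gens/mapP[g Gg ->] : gs`_i \in gs by rewrite mem_nth.
by have /mono_map_binom -> := (G_fiber Gg).1; rewrite mulr0.
Qed.

Theorem mono_ker_ideal_gen p : ker p <-> ideal_gen gens p.
Proof. by split; [apply: ker_ideal_gen | apply: ideal_gen_ker]. Qed.

Theorem mono_ker_universal_groebner : universal_groebner ker G.
Proof.
move=> le ord; split=> [g /G_fiber[fib _]|f f_ker f0]; first exact/mono_map_binom.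
have [_ [le_trans [_ [le_total _]]]] := ord.
have [mf fmf mf_max] : exists2 mf, mf \in msupp f & forall m, m \in msupp f -> le m mf.
  by apply: seq_max_exists; rewrite ?msupp_eq0.
have [m' [fm' m'mf fib]] := mono_map_ker_partner f_ker fmf.
have [g Gg [mg lead_g mg_mf]] :=
  fiber_lead_divides (esym fib) ord (mf_max _ fm') m'mf.
by exists g => //; exists mf, mg.
Qed.

Lemma cross_minimal_primitive g : g \in G ->
  (forall g', g' \in G -> (g'.1 <= g.1)%MM -> (g'.2 <= g.2)%MM -> g' = g) ->
  (forall g', g' \in G -> ~~ ((g'.2 <= g.1)%MM && (g'.1 <= g.2)%MM)) ->
  primitive ker g.1 g.2.
Proof.
move=> Gg same_dir no_rev; have [fib g12] := G_fiber Gg.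
split=> //; split=> [|g1 g2 g1g2 g1g g2g /mono_map_binom /= fib12]; first exact/mono_map_binom.
have [g' Gg' /orP[/andP[g'g1 g'g2]|/andP[g'g1 g'g2]]] := G_cross fib12 g1g2.
  have eg := same_dir g' Gg' (lepm_trans g'g1 g1g) (lepm_trans g'g2 g2g).
  by rewrite eg in g'g1 g'g2; split; apply: lepm_anti; apply/andP.
by have := no_rev g' Gg'; rewrite (lepm_trans g'g1 g1g) (lepm_trans g'g2 g2g).
Qed.

End CrossDivisorBasis.

Lemma sum_eq_ltn_exists (I : finType) (F G : I -> nat) i :
  (\sum_j F j = \sum_j G j)%N -> (G i < F i)%N -> exists j, (F j < G j)%N.
Proof.
move=> eqFG GFi; apply/existsP; apply: contraLR GFi => /existsPn FG.
rewrite -leqNgt; have := FG i; rewrite -leqNgt => FGi.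
have : (\sum_(j | j != i) G j <= \sum_(j | j != i) F j)%N.
  by apply: leq_sum => j _; rewrite leqNgt FG.
by rewrite (bigD1 i) // (bigD1 i (F := G)) //= in eqFG; lia.
Qed.

Lemma sum_excess_two n (F G : 'I_n -> nat) :
  (\sum_i G i + 2 <= \sum_i F i)%N ->
  (exists i, G i + 2 <= F i)%N \/ (exists i j : 'I_n, [/\ i < j, G i < F i & G j < F j]%N).
Proof.
move=> excess; have [i Fi|no_jump] := pickP (fun i => G i + 2 <= F i)%N; first by left; exists i.
right; set S := [pred i | G i < F i]%N.
have : (\sum_i F i <= \sum_i G i + #|S|)%N.
  rewrite -sum1_card [X in (_ + X)%N]big_mkcond -big_split /=; apply: leq_sum => i _.
  by have := no_jump i; rewrite /= inE; case: ltnP; lia.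
move=> le_FGS; have /card_gt1P[x [y [Sx Sy xy]]] : (1 < #|S|)%N by lia.
by case: (ltngtP x y) => [xy'|yx|/val_inj exy]; [exists x, y | exists y, x | rewrite exy eqxx in xy].
Qed.

Lemma big_edges_nat t (F : nat -> nat) :
  (\sum_(k < nE t) F k = \sum_(i < t) F i + \sum_(i < t) F (t + i) + F t.*2 + F (t.*2 + 1)
     + F (t.*2 + 2) + F (t.*2 + 3) + F (t.*2 + 4) + F (t.*2 + 5))%N.
Proof.
rewrite -(big_mkord xpredT F) /nE !big_nat_recr //=.
rewrite -addnn (big_cat_nat _ (leq_addr t t)) //= -{2}(add0n t) big_addn addnK.
rewrite !big_mkord; congr (_ + _ + _ + _ + _ + _ + _ + _)%N; try (congr F; lia).
by apply: eq_bigr => i _; rewrite addnC.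
Qed.

Section GraphGt.
Variable t : nat.
Implicit Types u v : 'X_{1..nE t}.

Lemma val_var_a (i : 'I_t) : var_a i = i :> nat.
Proof. by rewrite inordK // /nE; have := ltn_ord i; lia. Qed.
Lemma val_var_b (i : 'I_t) : var_b i = (t + i)%N :> nat.
Proof. by rewrite inordK // /nE; have := ltn_ord i; lia. Qed.
(* The offset 0 is kept so that eq_varE below also applies to e1. *)
Lemma val_var_e1 : var_e1 t = (t.*2 + 0)%N :> nat. Proof. by rewrite inordK // /nE; lia. Qed.
Lemma val_var_e2 : var_e2 t = (t.*2 + 1)%N :> nat. Proof. by rewrite inordK // /nE; lia. Qed.
Lemma val_var_e3 : var_e3 t = (t.*2 + 2)%N :> nat. Proof. by rewrite inordK // /nE; lia. Qed.
Lemma val_var_f1 : var_f1 t = (t.*2 + 3)%N :> nat. Proof. by rewrite inordK // /nE; lia. Qed.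
Lemma val_var_f2 : var_f2 t = (t.*2 + 4)%N :> nat. Proof. by rewrite inordK // /nE; lia. Qed.
Lemma val_var_f3 : var_f3 t = (t.*2 + 5)%N :> nat. Proof. by rewrite inordK // /nE; lia. Qed.

Definition val_var :=
  (val_var_a, val_var_b, val_var_e1, val_var_e2, val_var_e3, val_var_f1, val_var_f2, val_var_f3).

Lemma eq_dbl_ord c (i : 'I_t) : (t.*2 + c == i :> nat) = false.
Proof. by have := ltn_ord i; lia. Qed.
Lemma eq_ord_dbl c (i : 'I_t) : (i == t.*2 + c :> nat) = false.
Proof. by have := ltn_ord i; lia. Qed.
Lemma eq_shift_ord (i j : 'I_t) : (t + i == j :> nat) = false.
Proof. by have := ltn_ord j; lia. Qed.
Lemma eq_ord_shift (i j : 'I_t) : (i == t + j :> nat) = false.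
Proof. by have := ltn_ord i; lia. Qed.
Lemma eq_shift_dbl c (i : 'I_t) : (t + i == t.*2 + c :> nat) = false.
Proof. by have := ltn_ord i; lia. Qed.
Lemma eq_dbl_shift c (i : 'I_t) : (t.*2 + c == t + i :> nat) = false.
Proof. by have := ltn_ord i; lia. Qed.

Lemma eq_shift_shift (i j : 'I_t) : (t + i == t + j :> nat) = (i == j :> nat).
Proof. exact: eqn_add2l. Qed.
Lemma eq_dbl_dbl c d : (t.*2 + c == t.*2 + d :> nat) = (c == d).
Proof. exact: eqn_add2l. Qed.

Definition eq_varE := (eq_shift_shift, eq_dbl_dbl, eq_dbl_ord, eq_ord_dbl, eq_shift_ord, eq_ord_shift,
  eq_shift_dbl, eq_dbl_shift).

Lemma eq_ord n (i j : 'I_n) : (i == j) = (i == j :> nat).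
Proof. by []. Qed.

Ltac mnm_eval := rewrite /fFe /fEe /mU /= ?mnmDE ?mnm1E /= ?eq_ord ?val_var ?eq_varE /= ?eqxx /=.

Definition vtx (c : nat) : 'I_(nV t) := inord c.

Definition edge_mnm (k : 'I_(nE t)) : 'X_{1..nV t} :=
  (U_(vtx (endpts t k).1) + U_(vtx (endpts t k).2))%MM.

Lemma toric_mapE (K : fieldType) : toric_map K t = mono_map (K := K) edge_mnm.
Proof.
rewrite /toric_map /mono_map (@eq_mktuple _ _ (edge_image K t) (fun k => 'X_[edge_mnm k])) //.
by move=> k; rewrite /edge_image mpolyXD.
Qed.

Ltac endpts_simpl := intros; rewrite /edge_mnm /endpts ?val_var;
  repeat (case: ifP => ? /=; try by exfalso; lia); repeat f_equal; lia.

Lemma edge_mnm_a (i : 'I_t) : edge_mnm (var_a i) = (U_(vtx 0) + U_(vtx (6 + i)))%MM.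
Proof. have := ltn_ord i; endpts_simpl. Qed.
Lemma edge_mnm_b (i : 'I_t) : edge_mnm (var_b i) = (U_(vtx 1) + U_(vtx (6 + i)))%MM.
Proof. have := ltn_ord i; endpts_simpl. Qed.
Lemma edge_mnm_e1 : edge_mnm (var_e1 t) = (U_(vtx 0) + U_(vtx 2))%MM.
Proof. endpts_simpl. Qed.
Lemma edge_mnm_e2 : edge_mnm (var_e2 t) = (U_(vtx 2) + U_(vtx 3))%MM.
Proof. endpts_simpl. Qed.
Lemma edge_mnm_e3 : edge_mnm (var_e3 t) = (U_(vtx 3) + U_(vtx 0))%MM.
Proof. endpts_simpl. Qed.
Lemma edge_mnm_f1 : edge_mnm (var_f1 t) = (U_(vtx 1) + U_(vtx 4))%MM.
Proof. endpts_simpl. Qed.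
Lemma edge_mnm_f2 : edge_mnm (var_f2 t) = (U_(vtx 4) + U_(vtx 5))%MM.
Proof. endpts_simpl. Qed.
Lemma edge_mnm_f3 : edge_mnm (var_f3 t) = (U_(vtx 5) + U_(vtx 1))%MM.
Proof. endpts_simpl. Qed.

Definition edge_mnmE := (edge_mnm_a, edge_mnm_b, edge_mnm_e1, edge_mnm_e2, edge_mnm_e3,
  edge_mnm_f1, edge_mnm_f2, edge_mnm_f3).

Lemma big_edges (F : 'I_(nE t) -> nat) :
  (\sum_k F k = \sum_i F (var_a i) + \sum_i F (var_b i) + F (var_e1 t) + F (var_e2 t)
     + F (var_e3 t) + F (var_f1 t) + F (var_f2 t) + F (var_f3 t))%N.
Proof.
rewrite (eq_bigr (fun k : 'I_(nE t) => F (inord k))) ?(big_edges_nat t (fun k => F (inord k))) // => k _.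
by rewrite inord_val.
Qed.

Lemma eq_vtx a c : (a < t + 6)%N -> (c < t + 6)%N -> (vtx a == vtx c) = (a == c).
Proof. by move=> ? ?; rewrite eq_ord !inordK // /nV; lia. Qed.

Local Notation deg := (mono_exp edge_mnm).

Lemma deg_vtx m c : (c < t + 6)%N -> deg m (vtx c) =
  (\sum_i m (var_a i) * ((0 == c) + (6 + i == c)) +
   \sum_i m (var_b i) * ((1 == c) + (6 + i == c)) +
   m (var_e1 t) * ((0 == c) + (2 == c)) + m (var_e2 t) * ((2 == c) + (3 == c)) +
   m (var_e3 t) * ((3 == c) + (0 == c)) + m (var_f1 t) * ((1 == c) + (4 == c)) +
   m (var_f2 t) * ((4 == c) + (5 == c)) + m (var_f3 t) * ((5 == c) + (1 == c)))%N.
Proof.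
move=> ct; rewrite /mono_exp mnm_sumE (big_edges (fun k => (edge_mnm k *+ m k)%MM (vtx c))).
have U_vtx a : (a < t + 6)%N -> U_(vtx a)%MM (vtx c) = (a == c).
  by move=> at6; rewrite mnm1E eq_vtx.
have U_vtx_x a : (a < 6)%N -> U_(vtx a)%MM (vtx c) = (a == c).
  by move=> a6; apply: U_vtx; lia.
have U_vtx_y (i : 'I_t) : U_(vtx (6 + i)%N)%MM (vtx c) = (6 + i == c)%N.
  by apply: U_vtx; have := ltn_ord i; lia.
congr (_ + _ + _ + _ + _ + _ + _ + _)%N; try apply: eq_bigr => i _;
  by rewrite mulmnE edge_mnmE mnmDE mulnC ?U_vtx_y !U_vtx_x.
Qed.

Definition sum_a (m : 'X_{1..nE t}) := (\sum_(i < t) m (var_a i))%N.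
Definition sum_b (m : 'X_{1..nE t}) := (\sum_(i < t) m (var_b i))%N.

Lemma deg_vtx_lt6 m c : (c < 6)%N -> deg m (vtx c) =
  (sum_a m * (0 == c) + sum_b m * (1 == c) +
   m (var_e1 t) * ((0 == c) + (2 == c)) + m (var_e2 t) * ((2 == c) + (3 == c)) +
   m (var_e3 t) * ((3 == c) + (0 == c)) + m (var_f1 t) * ((1 == c) + (4 == c)) +
   m (var_f2 t) * ((4 == c) + (5 == c)) + m (var_f3 t) * ((5 == c) + (1 == c)))%N.
Proof.
move=> c6; rewrite deg_vtx; last lia.
rewrite /sum_a /sum_b !big_distrl; congr (_ + _ + _ + _ + _ + _ + _ + _)%N;
  apply: eq_bigr => i _; rewrite (_ : (6 + i == c)%N = false) ?addn0 //; lia.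
Qed.

Lemma deg_vtx_y m (j : 'I_t) : deg m (vtx (6 + j)) = (m (var_a j) + m (var_b j))%N.
Proof.
rewrite deg_vtx; last by have := ltn_ord j; lia.
have pick (F : 'I_t -> nat) : (\sum_i F i * (6 + i == 6 + j) = F j)%N.
  rewrite (bigD1 j) //= eqxx muln1 big1 ?addn0 // => i ij.
  by rewrite eqn_add2l -eq_ord (negbTE ij) muln0.
by rewrite /= !add0n !pick !muln0 !addn0.
Qed.

Lemma fiber_eqs u v : deg u = deg v ->
  [/\ (sum_a u + u (var_e1 t) + u (var_e3 t) = sum_a v + v (var_e1 t) + v (var_e3 t))%N,
      (sum_b u + u (var_f1 t) + u (var_f3 t) = sum_b v + v (var_f1 t) + v (var_f3 t))%N,
      (u (var_e1 t) + u (var_e2 t) = v (var_e1 t) + v (var_e2 t))%N,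
      (u (var_e2 t) + u (var_e3 t) = v (var_e2 t) + v (var_e3 t))%N &
   [/\ (u (var_f1 t) + u (var_f2 t) = v (var_f1 t) + v (var_f2 t))%N,
      (u (var_f2 t) + u (var_f3 t) = v (var_f2 t) + v (var_f3 t))%N &
      forall j, (u (var_a j) + u (var_b j) = v (var_a j) + v (var_b j))%N]].
Proof.
move=> fib; have at_vtx c : (c < 6)%N -> deg u (vtx c) = deg v (vtx c) by rewrite fib.
have := at_vtx 0%N isT; have := at_vtx 1%N isT; have := at_vtx 2%N isT;
have := at_vtx 3%N isT; have := at_vtx 4%N isT; have := at_vtx 5%N isT.
rewrite !deg_vtx_lt6 //= => d5 d4 d3 d2 d1 d0.
by split; try lia; split; try lia; move=> j; rewrite -!deg_vtx_y fib.
Qed.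

Lemma fiber_sum_ab u v : deg u = deg v -> (sum_a u + sum_b u = sum_a v + sum_b v)%N.
Proof.
move=> /fiber_eqs[_ _ _ _ [_ _ fib_y]].
by rewrite /sum_a /sum_b -!big_split; apply: eq_bigr => i _; apply: fib_y.
Qed.

Definition G1p (i j : 'I_t) : 'X_{1..nE t} * 'X_{1..nE t} :=
  ((mU (var_a i) + mU (var_b j))%MM, (mU (var_a j) + mU (var_b i))%MM).
Definition G2p (i j : 'I_t) : 'X_{1..nE t} * 'X_{1..nE t} :=
  ((mU (var_a i) + mU (var_a j) + fFe t)%MM, (fEe t + mU (var_b i) + mU (var_b j))%MM).
Definition G3p (i : 'I_t) : 'X_{1..nE t} * 'X_{1..nE t} :=
  ((mU (var_a i) + mU (var_a i) + fFe t)%MM, (fEe t + mU (var_b i) + mU (var_b i))%MM).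

Lemma Gall_cases g : g \in Gall t ->
  [\/ exists i j : 'I_t, (i < j)%N /\ g = G1p i j, exists i j : 'I_t, (i < j)%N /\ g = G2p i j
    | exists i, g = G3p i].
Proof.
rewrite !mem_cat => /or3P[/allpairsPdep|/allpairsPdep|/mapP].
- by case=> i [j [_ /[!mem_filter] /andP[ij _] ->]]; apply: Or31; exists i, j.
- by case=> i [j [_ /[!mem_filter] /andP[ij _] ->]]; apply: Or32; exists i, j.
- by case=> i _ ->; apply: Or33; exists i.
Qed.

Lemma G1p_Gall (i j : 'I_t) : (i < j)%N -> G1p i j \in Gall t.
Proof.
move=> ij; rewrite !mem_cat; apply/or3P/Or31/allpairsPdep.
by exists i, j; rewrite mem_enum mem_filter mem_enum ij.
Qed.

Lemma G2p_Gall (i j : 'I_t) : (i < j)%N -> G2p i j \in Gall t.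
Proof.
move=> ij; rewrite !mem_cat; apply/or3P/Or32/allpairsPdep.
by exists i, j; rewrite mem_enum mem_filter mem_enum ij.
Qed.

Lemma G3p_Gall (i : 'I_t) : G3p i \in Gall t.
Proof. by rewrite !mem_cat; apply/or3P/Or33/map_f; rewrite mem_enum. Qed.

Lemma Gall_fiber g : g \in Gall t -> deg g.1 = deg g.2 /\ g.1 != g.2.
Proof.
case/Gall_cases=> [[i [j [ij ->]]]|[i [j [ij ->]]]|[i ->]]; split;
  try by rewrite /fFe /fEe /mU !mono_expD !mono_expU !edge_mnmE;
         apply/mnmP => w; rewrite !mnmDE; lia.
all: apply/eqP => /(congr1 (fun m : 'X_{1..nE t} => m (var_a i))).
all: by mnm_eval; lia.
Qed.

Lemma G1pE (i j : 'I_t) :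
  G1p i j = (\sum_(x <- [:: var_a i; var_b j]) U_(x), \sum_(x <- [:: var_a j; var_b i]) U_(x))%MM.
Proof. by rewrite !big_cons !big_nil !addm0. Qed.

Lemma G2pE (i j : 'I_t) : G2p i j =
  (\sum_(x <- [:: var_a i; var_a j; var_f1 t; var_f3 t; var_e2 t]) U_(x),
   \sum_(x <- [:: var_f2 t; var_e1 t; var_e3 t; var_b i; var_b j]) U_(x))%MM.
Proof.
by rewrite !big_cons big_nil; congr (_, _); apply/mnmP => k; rewrite !mnmDE mnm0E /mU; lia.
Qed.

Lemma G3pE (i : 'I_t) : G3p i =
  (\sum_(x <- [:: var_a i; var_a i; var_f1 t; var_f3 t; var_e2 t]) U_(x),
   \sum_(x <- [:: var_f2 t; var_e1 t; var_e3 t; var_b i; var_b i]) U_(x))%MM.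
Proof.
by rewrite !big_cons big_nil; congr (_, _); apply/mnmP => k; rewrite !mnmDE mnm0E /mU; lia.
Qed.

Ltac count_le := intros; apply: mnm_sum_le => x; rewrite !inE;
  repeat (case/orP; [move/eqP->|]); try move/eqP->; mnm_eval; lia.

Lemma G1p_le1 u (i j : 'I_t) : (0 < u (var_a i))%N -> (0 < u (var_b j))%N ->
  ((G1p i j).1 <= u)%MM.
Proof. by rewrite G1pE /= => *; count_le. Qed.

Lemma G1p_le2 u (i j : 'I_t) : (0 < u (var_a j))%N -> (0 < u (var_b i))%N ->
  ((G1p i j).2 <= u)%MM.
Proof. by rewrite G1pE /= => *; count_le. Qed.

Lemma G2p_le1 u (i j : 'I_t) : (i < j)%N -> (0 < u (var_a i))%N -> (0 < u (var_a j))%N ->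
  (0 < u (var_f1 t))%N -> (0 < u (var_f3 t))%N -> (0 < u (var_e2 t))%N ->
  ((G2p i j).1 <= u)%MM.
Proof. by rewrite G2pE /= => *; count_le. Qed.

Lemma G2p_le2 u (i j : 'I_t) : (i < j)%N -> (0 < u (var_b i))%N -> (0 < u (var_b j))%N ->
  (0 < u (var_f2 t))%N -> (0 < u (var_e1 t))%N -> (0 < u (var_e3 t))%N ->
  ((G2p i j).2 <= u)%MM.
Proof. by rewrite G2pE /= => *; count_le. Qed.

Lemma G3p_le1 u (i : 'I_t) : (1 < u (var_a i))%N ->
  (0 < u (var_f1 t))%N -> (0 < u (var_f3 t))%N -> (0 < u (var_e2 t))%N ->
  ((G3p i).1 <= u)%MM.
Proof. by rewrite G3pE /= => *; count_le. Qed.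

Lemma G3p_le2 u (i : 'I_t) : (1 < u (var_b i))%N ->
  (0 < u (var_f2 t))%N -> (0 < u (var_e1 t))%N -> (0 < u (var_e3 t))%N ->
  ((G3p i).2 <= u)%MM.
Proof. by rewrite G3pE /= => *; count_le. Qed.

Lemma mnm_eq_vars u v :
  (forall i, u (var_a i) = v (var_a i)) -> (forall i, u (var_b i) = v (var_b i)) ->
  u (var_e1 t) = v (var_e1 t) -> u (var_e2 t) = v (var_e2 t) -> u (var_e3 t) = v (var_e3 t) ->
  u (var_f1 t) = v (var_f1 t) -> u (var_f2 t) = v (var_f2 t) -> u (var_f3 t) = v (var_f3 t) ->
  u = v.
Proof.
move=> eq_a eq_b e1 e2 e3 f1 f2 f3.
have : (\sum_k (u k != v k) == 0)%N.
  by rewrite big_edges !big1 => [|i _|i _]; rewrite ?eq_a ?eq_b ?e1 ?e2 ?e3 ?f1 ?f2 ?f3 ?eqxx.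
by rewrite sum_nat_eq0 => /forallP eq_uv; apply/mnmP => k; have := eq_uv k; rewrite /=; lia.
Qed.

Lemma Gall_cross_e2_gt u v : deg u = deg v -> (v (var_e2 t) < u (var_e2 t))%N ->
  exists2 g, g \in Gall t & ((g.1 <= u)%MM && (g.2 <= v)%MM).
Proof.
move=> fib e2_gt; have [x1 x2 z1 z2 [w1 w2 y]] := fiber_eqs fib.
have := fiber_sum_ab fib => sum_ab.
have : (sum_a v + 2 <= sum_a u)%N by lia.
case/sum_excess_two => [[i a_i]|[i [j [ij a_i a_j]]]].
  exists (G3p i); first exact: G3p_Gall.
  by have yi := y i; apply/andP; split; [apply: G3p_le1 | apply: G3p_le2]; lia.
exists (G2p i j); first exact: G2p_Gall.
by have yi := y i; have yj := y j; apply/andP; split; [apply: G2p_le1 | apply: G2p_le2]; lia.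
Qed.

Lemma Gall_cross_e2_eq u v : deg u = deg v -> u (var_e2 t) = v (var_e2 t) -> u != v ->
  exists2 g, g \in Gall t &
    ((g.1 <= u)%MM && (g.2 <= v)%MM) || ((g.2 <= u)%MM && (g.1 <= v)%MM).
Proof.
move=> fib e2_eq uv; have [x1 x2 z1 z2 [w1 w2 y]] := fiber_eqs fib.
have := fiber_sum_ab fib => sum_ab.
have [i [j [a_i a_j]]] :
    exists i j, (v (var_a i) < u (var_a i))%N /\ (u (var_a j) < v (var_a j))%N.
  have [l a_l] : exists l, u (var_a l) != v (var_a l).
    apply/existsP; apply: contraNT uv => /existsPn eq_a.
    have {}eq_a l : u (var_a l) = v (var_a l) by apply/eqP; rewrite -[_ == _]negbK eq_a.
    apply/eqP/mnm_eq_vars; (try by move=> l; have := y l; have := eq_a l; lia); lia.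
  have sum_a_eq : sum_a u = sum_a v by lia.
  case: (ltngtP (u (var_a l)) (v (var_a l))) => [lt_l|lt_l|/eqP]; last by rewrite (negbTE a_l).
    by have [j a_j] := sum_eq_ltn_exists (esym sum_a_eq) lt_l; exists j, l.
  by have [j a_j] := sum_eq_ltn_exists sum_a_eq lt_l; exists l, j.
have yi := y i; have yj := y j.
case: (ltngtP i j) => [ij|ji|/val_inj eij]; last by rewrite eij in a_i; lia.
  exists (G1p i j); first exact: G1p_Gall.
  by apply/orP; left; apply/andP; split; [apply: G1p_le1 | apply: G1p_le2]; lia.
exists (G1p j i); first exact: G1p_Gall.
by apply/orP; right; apply/andP; split; [apply: G1p_le2 | apply: G1p_le1]; lia.
Qed.

Lemma Gall_cross u v : deg u = deg v -> u != v ->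
  exists2 g, g \in Gall t &
    ((g.1 <= u)%MM && (g.2 <= v)%MM) || ((g.2 <= u)%MM && (g.1 <= v)%MM).
Proof.
move=> fib uv; case: (ltngtP (v (var_e2 t)) (u (var_e2 t))) => [e2_gt|e2_lt|e2_eq].
- by have [g Gg gle] := Gall_cross_e2_gt fib e2_gt; exists g; rewrite // gle.
- have [g Gg /andP[g1 g2]] := Gall_cross_e2_gt (esym fib) e2_lt.
  by exists g; rewrite // g1 g2 orbT.
- exact: Gall_cross_e2_eq fib (esym e2_eq) uv.
Qed.

Lemma Gall_le_swap g g' : g \in Gall t -> g' \in Gall t ->
  ~~ ((g'.2 <= g.1)%MM && (g'.1 <= g.2)%MM).
Proof.
case/Gall_cases=> [[i [j [ij ->]]]|[i [j [ij ->]]]|[i ->]];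
case/Gall_cases=> [[i' [j' [ij' ->]]]|[i' [j' [ij' ->]]]|[i' ->]];
apply/negP => /andP[/mnm_lepP le1 _].
2,3: by have := le1 (var_e1 t); mnm_eval.
1: by have := le1 (var_a j'); have := le1 (var_b i'); mnm_eval; lia.
all: by have := le1 (var_b i'); mnm_eval.
Qed.

Lemma Gall_le_same g g' : g \in Gall t -> g' \in Gall t ->
  (g'.1 <= g.1)%MM -> (g'.2 <= g.2)%MM -> g' = g.
Proof.
have eq_idx (i i' : 'I_t) : (i == i' :> nat) -> i' = i by move=> /eqP/val_inj->.
case/Gall_cases=> [[i [j [ij ->]]]|[i [j [ij ->]]]|[i ->]];
case/Gall_cases=> [[i' [j' [ij' ->]]]|[i' [j' [ij' ->]]]|[i' ->]];
move=> /mnm_lepP le1 _.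
- have := le1 (var_a i'); have := le1 (var_b j'); mnm_eval => lej lei.
  have ei : i' = i by apply: eq_idx; lia.
  have ej : j' = j by apply: eq_idx; lia.
  by rewrite ei ej.
- by have := le1 (var_e2 t); mnm_eval.
- by have := le1 (var_e2 t); mnm_eval.
- by have := le1 (var_b j'); mnm_eval.
- have := le1 (var_a i'); have := le1 (var_a j'); mnm_eval => lej lei.
  have ei : i' = i by apply: eq_idx; lia.
  have ej : j' = j by apply: eq_idx; lia.
  by rewrite ei ej.
- by have := le1 (var_a i'); mnm_eval; lia.
- by have := le1 (var_b j'); mnm_eval.
- by have := le1 (var_a i'); have := le1 (var_a j'); mnm_eval; lia.
- have := le1 (var_a i'); mnm_eval => lei.
  by have -> : i' = i by apply: eq_idx; lia.
Qed.

End GraphGt.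

Theorem theorem3p3 (K : closedFieldType) (charK0 : [pchar K] =i pred0)
  (t : nat) (ht : (2 <= t)%N) :
  [/\ (forall u, u \in Gall t -> primitive (toric_ideal K t) u.1 u.2),
      (forall p : {mpoly K[nE t]},
         toric_ideal K t p <->
         ideal_gen (fun q => q \in [seq binom K u | u <- Gall t]) p)
    & universal_groebner (toric_ideal K t) (Gall t)].
Proof.
rewrite /toric_ideal toric_mapE.
have fiber := @Gall_fiber t; have cross := @Gall_cross t.
split.
- move=> g Gg; apply: (cross_minimal_primitive K fiber cross Gg) => g' Gg'.
    exact: Gall_le_same.
  exact: Gall_le_swap.
- by move=> p; apply: mono_ker_ideal_gen.
- exact: mono_ker_universal_groebner.
Qed.
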